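(* Let $h\in\mathbb{R}[x_1,\ldots,x_n]$ be hyperbolic of degree $d$ with respect to $\mathbf{e}$, let $k$ be a positive integer, let $\mathbf{v}\in\mathbb{R}^n$, and let $$g_{\mathbf{v}}(t):=(1-D_{\mathbf{v}})^k(1-D_{\mathbf{e}}+kD_{\mathbf{v}})h(t\mathbf{e}).$$ Then $g_{\mathbf{v}}(t)=T_{k,d}\big(h(t\mathbf{e}-\mathbf{v})\big)$, where $T_{k,d}:\mathbb{R}[t]\to\mathbb{R}[t]$ is the linear operator $$T_{k,d}\Big(\sum_{j\geq0}a_jt^j\Big)=-\sum_{j=0}^d\Big(\frac{j+1}{k+1}a_{j+1}+(d-1-j)a_j\Big)(d-j)!\binom{k+1}{d-j}t^j.$$ Moreover, if $f$ is a $[0,1/k]$-rooted polynomial of degree $d$, then $T_{k,d}(f)$ is real-rooted.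
   Context: A homogeneous polynomial $h$ of degree $d$ is hyperbolic with respect to $\mathbf{e}\in\mathbb{R}^n$ if $h(\mathbf{e})\neq0$ and for every $\mathbf{x}$, $t\mapsto h(t\mathbf{e}-\mathbf{x})$ has only real zeros. $D_{\mathbf{v}}=\sum_kv_k\partial/\partial x_k$ is the directional derivative; in the expression for $g_{\mathbf{v}}$ the operator is applied to $h$ and the result evaluated at $t\mathbf{e}$. For an interval $I\subseteq\mathbb{R}$, a univariate polynomial is $I$-rooted if all its zeros lie in $I$. *)

From mathcomp Require Import all_boot all_order all_algebra.
From mathcomp Require Import reals.
From mathcomp Require Import mpoly.

Set Implicit Arguments.
Unset Strict Implicit.
Unset Printing Implicit Defensive.

Import Order.TTheory GRing.Theory Num.Theory.
Local Open Scope ring_scope.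

Definition real_rooted (R : realType) (p : {poly R}) : Prop :=
  exists s : seq R, p = lead_coef p *: \prod_(x <- s) ('X - x%:P).

Definition interval_rooted (R : realType) (a b : R) (p : {poly R}) : Prop :=
  exists s : seq R, all (fun x => a <= x <= b) s /\
    p = lead_coef p *: \prod_(x <- s) ('X - x%:P).

(* The univariate polynomial t |-> q(t e - x). *)
Definition restr (R : realType) (n : nat) (q : {mpoly R[n]})
    (e x : 'I_n -> R) : {poly R} :=
  mmap (fun c : R => c%:P) (fun i => e i *: 'X - (x i)%:P) q.

Definition hyperbolic (R : realType) (n : nat) (h : {mpoly R[n]})
    (e : 'I_n -> R) : Prop :=
  h.@[e] != 0 /\ forall x : 'I_n -> R, real_rooted (restr h e x).

Definition Dir (R : realType) (n : nat) (v : 'I_n -> R) (q : {mpoly R[n]})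
    : {mpoly R[n]} :=
  \sum_(i < n) v i *: q^`M(i).

Definition gv (R : realType) (n k : nat) (h : {mpoly R[n]})
    (e v : 'I_n -> R) : {poly R} :=
  restr (iter k (fun q => q - Dir v q) (h - Dir e h + k%:R *: Dir v h))
        e (fun _ => 0).

Definition Tkd (R : realType) (k d : nat) (p : {poly R}) : {poly R} :=
  - \sum_(j < d.+1)
      ((j.+1)%:R / (k.+1)%:R * p`_(j.+1) + (d%:R - 1 - j%:R) * p`_j)
        * ((d - j)`!)%:R * ('C(k.+1, d - j))%:R *: 'X^j.

From HB Require Import structures.
From mathcomp Require Import all_boot all_order all_algebra.
From mathcomp Require Import reals complex mpoly.
From mathcomp Require Import ring lra zify.

(* Put P(s, t) := h (t e + s v).  As h is d-homogeneous, P is bihomogeneous of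
   degree d, so P(s, t) = F(t, -s) where F(t, y) = \sum_j f_j t^j y^(d-j) is the
   homogenization of f := P(-1, .) = h(t e - v); moreover D_v and D_e act on P as
   d/ds and d/dt.  Hence g_v = [(1 - d/ds)^k (1 - d/dt + k d/ds) F(t, -s)]_(s=0),
   and [(1 - d/ds)^k (-s)^m]_(s=0) = k^_m (falling factorial) yields T_{k,d}(f).

   For the second claim write F(t, y) = c \prod_i (t - r_i y) with r_i in
   [0, 1/k]; the same computation gives T_{k,d}(f)(z) =
   [(1 - d/db)^k (1 - d/dt) F(t, k t - b)] at t = z, b = k z.  When Im t > 0 and
   Im b > 0 every factor t - r (k t - b) = (1 - k r) t + r b has positive
   imaginary part, and 1 - d/dx preserves the absence of zeros in the open upper
   half plane.  So the real polynomial T_{k,d}(f) has no zeros off the real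
   line. *)

Set Implicit Arguments.
Unset Strict Implicit.
Unset Printing Implicit Defensive.

Import Order.TTheory GRing.Theory Num.Theory.
Local Open Scope ring_scope.

Lemma ffactS_pascal k m : (k.+1 ^_ m.+1 = k ^_ m.+1 + m.+1 * k ^_ m)%N.
Proof. by rewrite -!bin_ffact binS factS; ring. Qed.

Section IdBDeriv.
Variable S : comNzRingType.
Implicit Types (p q : {poly S}) (c : S).

Definition idBderiv p := p - p^`().

Fact idBderiv_is_linear : linear idBderiv.
Proof. by move=> c p q; rewrite /idBderiv linearP scalerBr addrACA opprD. Qed.
HB.instance Definition _ :=
  GRing.isLinear.Build S {poly S} {poly S} _ idBderiv idBderiv_is_linear.

Definition idBderivn k p := iter k idBderiv p.

Fact idBderivn_is_linear k : linear (idBderivn k).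
Proof.
by elim: k => // k IHk c p q; rewrite /idBderivn /= -/(idBderivn k _) IHk linearP.
Qed.
HB.instance Definition _ k :=
  GRing.isLinear.Build S {poly S} {poly S} _ (idBderivn k) (idBderivn_is_linear k).

Lemma idBderivnS k p : idBderivn k.+1 p = idBderivn k (idBderiv p).
Proof. exact: iterSr. Qed.

Lemma horner_idBderivn_CsubX_exp c k m :
  (idBderivn k ((c%:P - 'X) ^+ m)).[c] = (k ^_ m)%:R.
Proof.
elim: k m => [|k IHk] m.
  by rewrite /= horner_exp !hornerE subrr expr0n ffact0n; case: m.
have dCsubX : (c%:P - 'X)^`() = -1 by rewrite derivB derivC derivX sub0r.
rewrite idBderivnS /idBderiv deriv_exp dCsubX mulN1r -mulNrn opprK linearD hornerD.
case: m => [|m]; first by rewrite mulr0n linear0 horner0 addr0 IHk !ffactn0.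
by rewrite raddfMn hornerMn !IHk -mulrnA -natrD ffactS_pascal mulnC.
Qed.

End IdBDeriv.

Section Homogenize.
Variable S : comNzRingType.
Implicit Types (p Y : {poly S}) (c x z : S).

Definition homogenize d p Y := \sum_(j < d.+1) p`_j *: ('X^j * Y ^+ (d - j)).

Lemma homogenizeM_XsubC d p Y x : (size p <= d.+1)%N ->
  homogenize d.+1 (p * ('X - x%:P)) Y = homogenize d p Y * ('X - x *: Y).
Proof.
move=> sp; have pd : p`_d.+1 = 0 by apply: nth_default.
rewrite /homogenize mulrBr -mul_polyC.
under eq_bigr do rewrite coefB coefMX coefMC scalerBl.
rewrite sumrB big_ord_recl /= scale0r add0r.
rewrite [X in _ - X]big_ord_recr /= pd mul0r scale0r addr0.
rewrite mulrBr !mulr_suml; congr (_ - _).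
  apply: eq_bigr => i _; rewrite /bump /= add1n subSS.
  by rewrite exprS -scalerAl; congr (_ *: _); ring.
apply: eq_bigr => i _; rewrite -scalerAl subSn; last by rewrite -ltnS.
by rewrite -scalerA; congr (_ *: _); rewrite -mul_polyC exprS; ring.
Qed.

Lemma homogenize_prod_XsubC c (s : seq S) Y :
  homogenize (size s) (c *: \prod_(x <- s) ('X - x%:P)) Y =
  c *: \prod_(x <- s) ('X - x *: Y).
Proof.
elim: s => [|x s IHs].
  by rewrite /homogenize !big_nil big_ord1 alg_polyC coefC /= mulr1 alg_polyC.
rewrite !big_cons !scalerAr mulrC homogenizeM_XsubC ?IHs; first by rewrite mulrC.
by rewrite (leq_trans (size_scale_leq _ _)) // size_prod_XsubC.
Qed.

Lemma horner_homogenize d p Y z :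
  (homogenize d p Y).[z] = \sum_(j < d.+1) p`_j * (z ^+ j * Y.[z] ^+ (d - j)).
Proof.
rewrite /homogenize horner_sum; apply: eq_bigr => j _.
by rewrite hornerZ hornerM hornerXn horner_exp.
Qed.

Lemma horner_deriv_homogenize d p Y z :
  ((homogenize d p Y)^`()).[z] = \sum_(j < d.+1) p`_j *
    (j%:R * z ^+ j.-1 * Y.[z] ^+ (d - j) +
     z ^+ j * (Y^`().[z] * Y.[z] ^+ (d - j).-1 * (d - j)%:R)).
Proof.
rewrite /homogenize (big_morph _ (@derivD _) (@deriv0 _)) horner_sum.
apply: eq_bigr => j _.
rewrite derivZ derivM derivXn deriv_exp hornerZ hornerD !hornerM !hornerMn.
rewrite hornerM hornerXn !horner_exp hornerX.
ring.
Qed.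

End Homogenize.

Definition Tkd_ffact (S : comNzRingType) k d (p : {poly S}) : {poly S} :=
  \sum_(j < d.+1) p`_j *: ((k ^_ (d - j))%:R *: ('X^j - j%:R *: 'X^(j.-1))
                          - (k * (d - j) * k ^_ (d - j).-1)%:R *: 'X^j).

Section TkdFfact.
Variable R : realType.
Implicit Types (f : {poly R}) (a b : R).

Lemma Tkd_coef_ffact k d i a b : (i <= d)%N -> (i = d -> b = 0) ->
  a * ((k ^_ (d - i))%:R - (k * (d - i) * k ^_ (d - i).-1)%:R)
    - b * (k ^_ (d - i.+1))%:R * i.+1%:R =
  - ((i.+1%:R / k.+1%:R * b + (d%:R - 1 - i%:R) * a)
       * ((d - i)`!)%:R * ('C(k.+1, d - i))%:R).
Proof.
move=> le_id b0; rewrite -[in RHS]mulrA.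
have -> : ((d - i)`!)%:R * ('C(k.+1, d - i))%:R = (k.+1 ^_ (d - i))%:R :> R.
  by rewrite -natrM mulnC bin_ffact.
have [m dE] : exists m, d = (i + m)%N by exists (d - i)%N; rewrite subnKC.
rewrite dE addKn natrD (_ : (i + m - i.+1 = m.-1)%N); last by lia.
case: m dE => [|m] dE.
  by rewrite b0 ?dE ?addn0 // muln0 mul0n; ring.
rewrite ffactSS ffactnSr !natrM /=.
have [le_mk|lt_km] := leqP m k; last by rewrite ffact_small //; ring.
rewrite natrB // -[m.+1]addn1 natrD; field.
by rewrite paddr_eq0 // oner_eq0.
Qed.

Lemma TkdE k d f : (size f <= d.+1)%N -> Tkd k d f = Tkd_ffact k d f.
Proof.
move=> sf; have fd : f`_d.+1 = 0 by apply: nth_default.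
rewrite /Tkd_ffact.
under eq_bigr do rewrite !scalerBr !scalerA addrAC -scalerBl -mulrBr.
rewrite sumrB [X in _ - X]big_ord_recl /= !mulr0 scale0r add0r.
rewrite [X in _ - X](_ : _ =
    \sum_(i < d.+1) (f`_i.+1 * (k ^_ (d - i.+1))%:R * i.+1%:R) *: 'X^i).
  rewrite /Tkd -sumrB -sumrN; apply: eq_bigr => i _.
  rewrite -scalerBl -scaleNr; congr (_ *: _).
  rewrite Tkd_coef_ffact //; first by rewrite -ltnS.
  by move=> iE; rewrite -iE in fd.
by rewrite big_ord_recr /= fd !mul0r scale0r addr0.
Qed.

End TkdFfact.

Section Stable.
Variable R : rcfType.
Local Notation C := R[i].
Local Notation Im := (@complex.Im R).
Implicit Types (q : {poly C}) (w x z : C).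

Definition stable q : Prop := forall z, 0 < Im z -> q.[z] != 0.

Lemma Im_mulcJ x : Im (x * x^*%C) = 0.
Proof. by case: x => a b /=; ring. Qed.

Lemma Im_realM (c : R) x : Im (c%:C%C * x) = c * Im x.
Proof. by case: x => a b /=; ring. Qed.

Lemma Im_gt0_neq0 z : 0 < Im z -> z != 0.
Proof. by apply: contraTneq => ->; rewrite ltxx. Qed.

Lemma Im_logderiv_mulXsubC w r r' : 0 < Im w -> r != 0 ->
  r' = 0 \/ Im (r' * r^*%C) < 0 -> Im ((r + w * r') * (w * r)^*%C) < 0.
Proof.
case: w => a b; case: r => p q; case: r' => u v /= b_gt0 r_neq0 r'_spec.
have pq_gt0 : 0 < p ^+ 2 + q ^+ 2.
  have : ~~ ((p == 0) && (q == 0)) by apply: contra r_neq0 => /andP[/eqP-> /eqP->].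
  by case/nandP => /lt_total/orP[] ?; nra.
have -> : (p + (a * u - b * v)) * - (a * q + b * p)
          + (q + (a * v + b * u)) * (a * p - b * q)
    = - (p ^+ 2 + q ^+ 2) * b + (a ^+ 2 + b ^+ 2) * (u * - q + v * p) by ring.
by case: r'_spec => [[-> ->]|]; nra.
Qed.

(* [Im (q' q^* ) = |q|^2 Im (q'/q)] and [q'/q = \sum_x 1/(z - x)] has negative
   imaginary part when every root [x] lies below [z]. *)
Lemma Im_logderiv_prod_XsubC c (s : seq C) z : c != 0 ->
  all (fun x => Im x <= 0) s -> 0 < Im z ->
  let q := c *: \prod_(x <- s) ('X - x%:P) in
  q.[z] != 0 /\ ((q^`()).[z] = 0 \/ Im ((q^`()).[z] * (q.[z])^*%C) < 0).
Proof.
move=> c_neq0; elim: s => [|x s IHs] /=.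
  by move=> _ _; rewrite big_nil alg_polyC derivC horner0 hornerC; split=> //; left.
case/andP=> Imx_le0 s_low Imz_gt0; have [qz_neq0 qz'] := IHs s_low Imz_gt0.
rewrite big_cons scalerAr mulrC.
set q := c *: _ in qz_neq0 qz' *.
rewrite derivM derivXsubC mulr1 hornerD !hornerM hornerXsubC.
have zx_gt0 : 0 < Im (z - x) by rewrite raddfB subr_gt0 (le_lt_trans Imx_le0).
split; first by rewrite mulf_neq0 // Im_gt0_neq0.
by right; rewrite addrC [q^`().[z] * _]mulrC [q.[z] * _]mulrC; apply: Im_logderiv_mulXsubC.
Qed.

Lemma stable_idBderiv q : stable q -> stable (idBderiv q).
Proof.
move=> q_stable z Imz_gt0.
have [s qE] := closed_field_poly_normal q.
have q_neq0 : q != 0.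
  by apply: contraTneq (q_stable _ (ltr01 : 0 < Im 'i%C)) => ->; rewrite horner0 eqxx.
have s_low : all (fun x => Im x <= 0) s.
  apply/allP => x xs; rewrite leNgt; apply/negP => /q_stable.
  have qx0 : root q x by rewrite qE rootZ ?lead_coef_eq0 // root_prod_XsubC.
  by rewrite (rootP qx0) eqxx.
have lc_neq0 : lead_coef q != 0 by rewrite lead_coef_eq0.
case: (Im_logderiv_prod_XsubC lc_neq0 s_low Imz_gt0); rewrite /= -qE => qz_neq0 qz'_spec.
rewrite hornerD hornerN subr_eq0; apply/eqP => qzE.
case: qz'_spec => [qz'0|]; first by move: qz_neq0; rewrite qzE qz'0 eqxx.
by rewrite -qzE Im_mulcJ ltxx.
Qed.

Lemma stable_idBderivn k q : stable q -> stable (idBderivn k q).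
Proof. by move=> q_stable; elim: k => // k IHk; apply: stable_idBderiv. Qed.

End Stable.

Section RealRooted.
Variable R : realType.
Local Notation C := R[i].
Local Notation Im := (@complex.Im R).
Local Notation toC := (real_complex R).

Lemma real_rooted_stable (p : {poly R}) : stable (map_poly toC p) -> real_rooted p.
Proof.
move=> pC_stable; have [->|p_neq0] := eqVneq p 0.
  by exists [::]; rewrite lead_coef0 scale0r.
set pC := map_poly toC p in pC_stable.
have [s pCE] := closed_field_poly_normal pC.
have s_roots x : x \in s -> root pC x.
  by move=> xs; rewrite pCE rootZ ?lead_coef_eq0 ?map_poly_eq0 // root_prod_XsubC.
have Im_root_le0 x : root pC x -> Im x <= 0.
  by move=> /rootP pCx0; rewrite leNgt; apply/negP => /pC_stable; rewrite pCx0 eqxx.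
have Im_s x : x \in s -> Im x = 0.
  move=> xs; apply/eqP; rewrite eq_le Im_root_le0 ?s_roots //=.
  have : root pC x^*%C.
    rewrite -complex_root_conj -map_poly_comp (eq_map_poly (fun y => conjc_real y)).
    exact: s_roots.
  by move/Im_root_le0; case: x {xs} => a b /=; rewrite oppr_le0.
exists (map (@complex.Re R) s); apply: (map_poly_inj toC).
rewrite map_polyZ rmorph_prod big_map -/pC {1}pCE.
rewrite lead_coef_map_inj //; last exact: complexI.
congr (_ *: _); apply: eq_big_seq => x xs /=; rewrite map_polyXsubC.
by move: (Im_s x xs); case: x {xs} => a b /= ->.
Qed.

End RealRooted.

Section TkdRealRooted.
Variable R : realType.
Local Notation C := R[i].
Local Notation Im := (@complex.Im R).
Local Notation toC := (real_complex R).
Implicit Types (k d : nat) (a b z : C).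

Lemma Im_natM (m : nat) z : Im (m%:R * z) = m%:R * Im z.
Proof. by rewrite -(rmorph_nat toC) Im_realM. Qed.

Lemma Im_factor_gt0 k (rho : R) a b : (0 < k)%N -> 0 <= rho <= k%:R^-1 ->
  0 < Im a -> 0 < Im b -> 0 < Im (a - toC rho * (k%:R * a - b)).
Proof.
move=> k_gt0 /andP[rho_ge0 rho_le] Ima_gt0 Imb_gt0.
rewrite raddfB /= Im_realM raddfB /= Im_natM.
have k_pos : 0 < k%:R :> R by rewrite ltr0n.
have rhok_le1 : rho * k%:R <= 1.
  by have := ler_wpM2r (ltW k_pos) rho_le; rewrite mulVf ?lt0r_neq0.
have [->|rho_neq0] := eqVneq rho 0; first by rewrite mul0r subr0.
have rho_gt0 : 0 < rho by rewrite lt_def rho_neq0.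
nra.
Qed.

Definition homog_idBderiv_poly k d (p : {poly C}) z : {poly C} :=
  let Y := (k%:R * z)%:P - 'X in
  \sum_(j < d.+1) p`_j *: ((z ^+ j - j%:R * z ^+ j.-1) *: Y ^+ (d - j)
                           - (k%:R * (d - j)%:R * z ^+ j) *: Y ^+ (d - j).-1).

Lemma horner_homog_idBderiv_poly k d p z b :
  (homog_idBderiv_poly k d p z).[b] =
  (idBderiv (homogenize d p (k%:R *: 'X - b%:P))).[z].
Proof.
rewrite /idBderiv hornerD hornerN horner_homogenize horner_deriv_homogenize -sumrB.
rewrite horner_sum; apply: eq_bigr => j _.
rewrite derivB derivZ derivX derivC subr0.
rewrite !(hornerD, hornerN, hornerZ, horner_exp, hornerX, hornerC).
ring.
Qed.

Lemma horner_Tkd_ffact k d (f : {poly R}) z :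
  (map_poly toC (Tkd_ffact k d f)).[z] =
  (idBderivn k (homog_idBderiv_poly k d (map_poly toC f) z)).[k%:R * z].
Proof.
rewrite /Tkd_ffact /homog_idBderiv_poly rmorph_sum !linear_sum /= !horner_sum.
apply: eq_bigr => j _; rewrite coef_map /=.
rewrite [idBderivn _ _]linearZ /= [idBderivn _ (_ - _)]linearB /=.
rewrite ![idBderivn _ (_ *: _)]linearZ /=.
rewrite map_polyZ rmorphB /= !map_polyZ !rmorphB /= !map_polyZ !map_polyXn.
rewrite !(hornerD, hornerN, hornerZ, hornerXn) !horner_idBderivn_CsubX_exp.
rewrite !rmorph_nat !natrM.
ring.
Qed.

Lemma real_rooted_Tkd k d (f : {poly R}) : (0 < k)%N -> size f = d.+1 ->
  interval_rooted 0 k%:R^-1 f -> real_rooted (Tkd k d f).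
Proof.
move=> k_gt0 sf [s [s_in fE]].
rewrite TkdE ?sf //; apply: real_rooted_stable => z Imz_gt0.
rewrite horner_Tkd_ffact; apply: stable_idBderivn; last by rewrite Im_natM mulr_gt0 ?ltr0n.
move=> b Imb_gt0; rewrite horner_homog_idBderiv_poly.
apply: stable_idBderiv (Imz_gt0) => a Ima_gt0.
have lc_neq0 : lead_coef f != 0 by rewrite lead_coef_eq0 -size_poly_gt0 sf.
have size_s : size s = d by move: sf; rewrite fE size_scale // size_prod_XsubC => -[].
have fCE : map_poly toC f = toC (lead_coef f) *: \prod_(x <- map toC s) ('X - x%:P).
  by rewrite {1}fE map_polyZ rmorph_prod big_map; under eq_bigr do rewrite /= map_polyXsubC.
rewrite fCE -size_s -(size_map toC) homogenize_prod_XsubC hornerZ horner_prod.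
rewrite mulf_neq0 ?fmorph_eq0 // big_map prodf_seq_neq0; apply/allP => x xs /=.
rewrite !(hornerD, hornerN, hornerZ, hornerX, hornerC); apply: Im_gt0_neq0.
by apply: Im_factor_gt0 => //; apply: (allP s_in).
Qed.

End TkdRealRooted.

Section DirectionalDerivative.
Variables (R : realType) (n : nat).
Implicit Types (p q : {mpoly R[n]}) (w : 'I_n -> R).

Fact Dir_is_linear w : linear (Dir w).
Proof.
move=> c p q; rewrite /Dir scaler_sumr -big_split; apply: eq_bigr => i _ /=.
by rewrite linearP scalerDr !scalerA mulrC.
Qed.
HB.instance Definition _ w :=
  GRing.isLinear.Build R {mpoly R[n]} {mpoly R[n]} _ (Dir w) (Dir_is_linear w).

Lemma DirM w p q : Dir w (p * q) = Dir w p * q + p * Dir w q.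
Proof.
rewrite /Dir mulr_suml mulr_sumr -big_split; apply: eq_bigr => i _.
by rewrite mderivM scalerDr -scalerAl -scalerAr.
Qed.

Lemma DirC w c : Dir w c%:MP = 0.
Proof. by rewrite /Dir big1 // => i _; rewrite mderivC scaler0. Qed.

Lemma DirX w i : Dir w 'X_i = (w i)%:MP.
Proof.
have U_subK : (U_(i) - U_(i))%MM = 0%MM by apply/mnmP => j; rewrite mnmBE subnn mnm0E.
rewrite /Dir (bigD1 i) //= big1 ?addr0 => [|j ji].
  by rewrite mderivX mnm1E eqxx U_subK mpolyX0 scale1r -mul_mpolyC mulr1.
by rewrite mderivX mnm1E eq_sym (negbTE ji) scale0r scaler0.
Qed.

Lemma Dir_comm w w' q : Dir w (Dir w' q) = Dir w' (Dir w q).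
Proof.
have DirDirE w1 w2 : Dir w1 (Dir w2 q) =
    \sum_(i < n) \sum_(j < n) (w1 i * w2 j) *: q^`M(j)^`M(i).
  rewrite /Dir; apply: eq_bigr => i _; rewrite (raddf_sum (mderiv i)) /= scaler_sumr.
  by apply: eq_bigr => j _; rewrite mderivZ scalerA.
rewrite !DirDirE exchange_big; apply: eq_bigr => i _; apply: eq_bigr => j _.
by rewrite mulrC mderiv_comm.
Qed.

Definition idBDirn w k q := iter k (fun q => q - Dir w q) q.

Lemma Dir_idBDirn w w' k q : Dir w (idBDirn w' k q) = idBDirn w' k (Dir w q).
Proof. by elim: k => //= k IHk; rewrite linearB /= IHk Dir_comm IHk. Qed.

End DirectionalDerivative.

Section DerivMmap.
Variables (R : realType) (n : nat) (S : comNzRingType).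
Variables (F : {rmorphism R -> {poly S}}) (g : 'I_n -> {poly S}) (w : 'I_n -> R).
Hypothesis deriv_F : forall c, (F c)^`() = 0.
Hypothesis deriv_g : forall i, (g i)^`() = F (w i).

Lemma deriv_mmap (q : {mpoly R[n]}) : (mmap F g q)^`() = mmap F g (Dir w q).
Proof.
pose chain r := (mmap F g r)^`() = mmap F g (Dir w r).
have chainD p r : chain p -> chain r -> chain (p + r).
  by rewrite /chain mmapD derivD => -> ->; rewrite linearD mmapD.
have chainM p r : chain p -> chain r -> chain (p * r).
  by rewrite /chain !rmorphM derivM => -> ->; rewrite DirM mmapD !rmorphM.
have chainC c : chain c%:MP by rewrite /chain mmapC deriv_F DirC mmap0.
have chainX i : chain 'X_i by rewrite /chain mmapX mmap1U deriv_g DirX mmapC.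
have chainXn i k : chain ('X_i ^+ k).
  by elim: k => [|k IHk]; rewrite ?expr0 -?mpolyC1 // exprS; apply: chainM.
have chainXm m : chain 'X_[m].
  by rewrite mpolyXE_id; apply: big_ind => //; rewrite -mpolyC1.
elim/mpolyind: q => [|c m p _ _ chain_p]; first by have := chainC 0; rewrite mpolyC0.
by apply: chainD => //; rewrite -mul_mpolyC; apply: chainM.
Qed.

End DerivMmap.

Section Bihomogeneous.
Variable S : comNzRingType.
Implicit Types (P Q : {poly {poly S}}) (a c : S).

Definition bihomog d P := forall b j, (b + j != d)%N -> P`_b`_j = 0.

Lemma bihomog0 d : bihomog d 0.
Proof. by move=> b j _; rewrite !coef0. Qed.

Lemma bihomogD d P Q : bihomog d P -> bihomog d Q -> bihomog d (P + Q).
Proof. by move=> homP homQ b j bj; rewrite !coefD homP // homQ // addr0. Qed.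

Lemma bihomogN d P : bihomog d P -> bihomog d (- P).
Proof. by move=> homP b j bj; rewrite !coefN homP // oppr0. Qed.

Lemma bihomogM d1 d2 P Q :
  bihomog d1 P -> bihomog d2 Q -> bihomog (d1 + d2)%N (P * Q).
Proof.
move=> homP homQ b j bj; rewrite coefM coef_sum big1 // => i _.
rewrite coefM big1 // => l _.
have [il|il] := eqVneq (i + l)%N d1; last by rewrite homP ?mul0r.
rewrite (homQ (b - i)%N (j - l)%N) ?mulr0 //.
by have := ltn_ord i; have := ltn_ord l; move: bj il; lia.
Qed.

Lemma bihomogXn d P m : bihomog d P -> bihomog (d * m)%N (P ^+ m).
Proof.
move=> homP; elim: m => [|m IHm]; last by rewrite exprS mulnS; apply: bihomogM.
by rewrite muln0 expr0 => -[|b] [|j] //= _; rewrite ?coef1 ?coef0 // coefC.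
Qed.

Lemma bihomogC c : bihomog 0 c%:P%:P.
Proof. by move=> [|b] [|j] //= _; rewrite !coefC. Qed.

Lemma bihomog_linear a c : bihomog 1 ((a *: 'X)%:P + c%:P%:P * 'X).
Proof.
move=> b j bj; rewrite coefD coefMX !coefC.
case: b bj => [|[|b]] /= bj; last by rewrite addr0 coef0.
  by rewrite addr0 coefZ coefX; case: j bj => [|[|j]] //=; rewrite mulr0.
by rewrite add0r coefC; case: j bj.
Qed.

Lemma bihomogCX c j : bihomog j (c *: 'X^j)%:P.
Proof.
move=> [|b] l bl; rewrite coefC /= ?coef0 // coefZ coefXn.
by move: bl; rewrite add0n eq_sym => /negbTE ->; rewrite mulr0.
Qed.

Lemma bihomog_size d P : bihomog d P -> (size P <= d.+1)%N.
Proof.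
move=> homP; apply/leq_sizeP => b db; apply/polyP => j.
by rewrite coef0 homP //; move: db; lia.
Qed.

Lemma bihomog_hornerN1_coef d P j : bihomog d P ->
  (P.[-1])`_j = if (j <= d)%N then (-1) ^+ (d - j) * P`_(d - j)`_j else 0.
Proof.
move=> homP; rewrite -polyC1 -polyCN (horner_coef_wide _ (bihomog_size homP)) coef_sum.
case: ifP => jd.
  have dj_lt : (d - j < d.+1)%N by lia.
  rewrite (bigD1 (Ordinal dj_lt)) //= big1 ?addr0; first by rewrite -rmorphXn coefMC mulrC.
  move=> i /eqP ij; rewrite -rmorphXn coefMC homP ?mul0r //.
  by apply/eqP => ijd; apply: ij; apply: val_inj => /=; lia.
rewrite big1 // => i _; rewrite -rmorphXn coefMC homP ?mul0r //.
by apply/eqP; move: jd; lia.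
Qed.

Lemma size_bihomog_hornerN1 d P : bihomog d P -> (size P.[-1] <= d.+1)%N.
Proof.
move=> homP; apply/leq_sizeP => j dj; rewrite (bihomog_hornerN1_coef j homP).
by case: ifP => //; move: dj; lia.
Qed.

Lemma bihomog_hornerN1_eq0 d P : bihomog d P -> P.[-1] = 0 -> P = 0.
Proof.
move=> homP PN1; apply/polyP => b; apply/polyP => j; rewrite !coef0.
have [bj|bj] := eqVneq (b + j)%N d; last by rewrite homP.
have := bihomog_hornerN1_coef j homP; rewrite PN1 coef0.
have -> : (j <= d)%N by lia.
have -> : (d - j = b)%N by lia.
by move/esym=> Pbj0; rewrite -(signrMK b P`_b`_j) Pbj0 mulr0.
Qed.

Lemma bihomog_expand d P : bihomog d P ->
  P = \sum_(j < d.+1) ((P.[-1])`_j *: 'X^j) *: (- 'X) ^+ (d - j).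
Proof.
move=> homP; apply/eqP; rewrite -subr_eq0; apply/eqP.
apply: (bihomog_hornerN1_eq0 (d := d)).
  apply: bihomogD (bihomogN _) => //; apply: big_ind => [|? ?|j _]; first exact: bihomog0.
    exact: bihomogD.
  have homX : bihomog 1 (- 'X : {poly {poly S}}).
    by have := bihomog_linear 0 (-1); rewrite scale0r polyC0 add0r !polyCN polyC1 mulN1r.
  have := bihomogM (@bihomogCX (P.[-1])`_j j) (bihomogXn (m := d - j) homX).
  by rewrite mul1n subnKC ?mul_polyC // -ltnS.
rewrite hornerD hornerN horner_sum; apply/eqP; rewrite subr_eq0; apply/eqP.
under eq_bigr do rewrite hornerZ horner_exp hornerN hornerX opprK expr1n mulr1.
rewrite -poly_def; apply/polyP => i; rewrite coef_poly; case: ifP => // id.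
by rewrite (bihomog_hornerN1_coef i homP) -ltnS id.
Qed.

End Bihomogeneous.

Section RestrPlane.
Variables (R : realType) (n : nat).
Implicit Types (q : {mpoly R[n]}) (e v x : 'I_n -> R).

Lemma eq_mmap (S : nzRingType) (f1 f2 : R -> S) (g1 g2 : 'I_n -> S) q :
  f1 =1 f2 -> g1 =1 g2 -> mmap f1 g1 q = mmap f2 g2 q.
Proof. by move=> f12 g12; apply: eq_bigr => m _; rewrite f12 (mmap1_eq _ g12). Qed.

Lemma horner_mmap (S : comNzRingType) (f : R -> {poly S}) (g : 'I_n -> {poly S}) a q :
  (mmap f g q).[a] = mmap (fun c => (f c).[a]) (fun i => (g i).[a]) q.
Proof.
rewrite /mmap horner_sum; apply: eq_bigr => m _.
rewrite hornerM /mmap1 horner_prod; congr (_ * _).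
by apply: eq_bigr => i _; rewrite horner_exp.
Qed.

(* [restr_plane e v q] is the bivariate polynomial [(s, t) |-> q (t e + s v)],
   with [s] the outer and [t] the inner variable. *)
Definition restr_plane e v q : {poly {poly R}} :=
  mmap (@polyC _ \o @polyC R) (fun i => (e i *: 'X)%:P + (v i)%:P%:P * 'X) q.

Lemma bihomog_restr_plane d e v q : q \is d.-homog -> bihomog d (restr_plane e v q).
Proof.
move=> q_homog; rewrite /restr_plane /mmap big_seq; apply: big_ind => [|? ?|m m_supp].
- exact: bihomog0.
- exact: bihomogD.
have hom_m : bihomog (mdeg m) (mmap1 (fun i => (e i *: 'X)%:P + (v i)%:P%:P * 'X) m).
  rewrite mdegE /mmap1; elim/big_rec2: _ => [|i j P _ homP]; first exact: (bihomogC 1).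
  have := bihomogM (bihomogXn (m := m i) (bihomog_linear (e i) (v i))) homP.
  by rewrite mul1n.
by have := bihomogM (bihomogC q@_m) hom_m; rewrite add0n (dhomog_mf q_homog m_supp).
Qed.

Lemma restr_plane_horner e v (c : R) x q : (forall i, x i = - (c * v i)) ->
  restr q e x = (restr_plane e v q).[c%:P].
Proof.
move=> xE; rewrite /restr /restr_plane horner_mmap; apply: eq_mmap => [c'|i] /=.
  by rewrite hornerC.
by rewrite hornerD hornerC hornerM hornerX xE hornerC polyCN opprK -polyCM mulrC.
Qed.

Lemma deriv_restr_plane e v q : (restr_plane e v q)^`() = restr_plane e v (Dir v q).
Proof.
apply: deriv_mmap => [c|i] /=; first exact: derivC.
by rewrite derivD derivC add0r mul_polyC derivZ derivX alg_polyC.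
Qed.

Lemma deriv_restr0 e q : (restr q e (fun=> 0))^`() = restr (Dir e q) e (fun=> 0).
Proof.
have restr0E p : restr p e (fun=> 0) = mmap (@polyC R) (fun i => e i *: 'X) p.
  by apply: eq_mmap => // i; rewrite subr0.
rewrite !restr0E; apply: deriv_mmap => [c|i] /=; first exact: derivC.
by rewrite derivZ derivX alg_polyC.
Qed.

Lemma restr_plane_idBDirn e v k q :
  restr_plane e v (idBDirn v k q) = idBderivn k (restr_plane e v q).
Proof.
elim: k => // k IHk.
have restr_planeB p r : restr_plane e v (p - r) = restr_plane e v p - restr_plane e v r.
  exact: mmapB.
by rewrite [idBDirn _ _ _]/= restr_planeB -deriv_restr_plane -/(idBDirn v k q) IHk.
Qed.

End RestrPlane.

Section ExpandNegX.
Variable S : comNzRingType.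
Variables (k d : nat) (c : nat -> S).

Lemma horner0_idBderivn_NX_exp m : (idBderivn k ((- 'X) ^+ m)).[0] = (k ^_ m)%:R :> S.
Proof. by rewrite -(horner_idBderivn_CsubX_exp 0) polyC0 sub0r. Qed.

Lemma horner0_idBderivn_NX_expand :
  (idBderivn k (\sum_(j < d.+1) c j *: (- 'X) ^+ (d - j))).[0] =
  \sum_(j < d.+1) c j * (k ^_ (d - j))%:R.
Proof.
rewrite linear_sum horner_sum; apply: eq_bigr => j _.
by rewrite linearZ hornerZ horner0_idBderivn_NX_exp.
Qed.

Lemma horner0_idBderivn_deriv_NX_expand :
  (idBderivn k (\sum_(j < d.+1) c j *: (- 'X) ^+ (d - j))^`()).[0] =
  - \sum_(j < d.+1) c j * ((d - j) * k ^_ (d - j).-1)%:R.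
Proof.
rewrite raddf_sum /= linear_sum horner_sum -sumrN; apply: eq_bigr => j _.
rewrite derivZ deriv_exp derivN derivX mulN1r mulNrn scalerN.
rewrite raddfN /= linearZ /= raddfMn /=.
by rewrite hornerN hornerZ hornerMn horner0_idBderivn_NX_exp natrM mulr_natl.
Qed.

End ExpandNegX.

Lemma bihomog_idBderivn_Tkd (S : comNzRingType) k d (P : {poly {poly S}}) :
  bihomog d P ->
  (idBderivn k P).[0] - ((idBderivn k P).[0])^`() + k%:R *: (idBderivn k P^`()).[0] =
  Tkd_ffact k d P.[-1].
Proof.
move=> homP; set f := P.[-1]; rewrite (bihomog_expand homP) -/f.
rewrite (horner0_idBderivn_NX_expand k d (fun j => f`_j *: 'X^j)).
rewrite (horner0_idBderivn_deriv_NX_expand k d (fun j => f`_j *: 'X^j)).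
rewrite (big_morph _ (@derivD _) (@deriv0 _)) scalerN scaler_sumr -!sumrB.
apply: eq_bigr => j _; rewrite derivM -polyC_natr derivC mulr0 addr0 derivZ derivXn.
rewrite -!mul_polyC ?polyCM !polyC_natr.
ring.
Qed.

Lemma gv_Tkd (R : realType) n d k (h : {mpoly R[n]}) e v : h \is d.-homog ->
  gv k h e v = Tkd k d (restr h e v).
Proof.
move=> h_homog; set P := restr_plane e v h.
have homP : bihomog d P by apply: bihomog_restr_plane.
have restrE : restr h e v = P.[-1].
  by rewrite -polyC1 -polyCN; apply: restr_plane_horner => i; rewrite mulN1r opprK.
have restr0E q : restr q e (fun=> 0) = (restr_plane e v q).[0].
  by rewrite -polyC0; apply: restr_plane_horner => i; rewrite mul0r oppr0.
have dtE : (idBderivn k (restr_plane e v (Dir e h))).[0] = ((idBderivn k P).[0])^`().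
  rewrite -restr_plane_idBDirn -Dir_idBDirn -restr0E -deriv_restr0.
  by rewrite restr0E restr_plane_idBDirn.
rewrite restrE TkdE ?size_bihomog_hornerN1 // -bihomog_idBderivn_Tkd //.
rewrite /gv -/(idBDirn v k _) restr0E restr_plane_idBDirn /restr_plane.
rewrite mmapD mmapB mmapZ -!/(restr_plane _ _ _) -deriv_restr_plane -/P /= mul_polyC.
rewrite linearD /= linearB /= linearZ /= !hornerD hornerN hornerZ mul_polyC.
by rewrite dtE.
Qed.

Unset Implicit Arguments.
Set Strict Implicit.

Theorem lemma6p8 (R : realType) (n d k : nat) (h : {mpoly R[n]})
    (e v : 'I_n -> R) :
  h \is d.-homog -> hyperbolic h e -> (0 < k)%N ->
  gv k h e v = Tkd k d (restr h e v) /\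
  (forall f : {poly R}, size f = d.+1 -> interval_rooted 0 (k%:R^-1) f ->
     real_rooted (Tkd k d f)).
Proof.
move=> h_homog _ k_gt0; split; first exact: gv_Tkd.
by move=> f size_f; apply: real_rooted_Tkd.
Qed.
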